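(* For every positive integer $n$ and every string $u$ of length $n$ over a finite alphabet, the sum of the exponents of all runs in $u$ is less than $4.1\,n$.
   Context: For a word $u=u_1\cdots u_m$, the (shortest) period is the smallest positive integer $p$ with $u_i=u_{i+p}$ for all $1\le i\le m-p$; $u[i..j]=u_i\cdots u_j$. A run in $u$ is an interval $[i..j]$ such that the period $p$ of $u[i..j]$ satisfies $2p\le j-i+1$, and $u[i-1]\ne u[i+p-1]$ (or $i=1$) and $u[j-p+1]\ne u[j+1]$ (or $j=|u|$). Its exponent is $(j-i+1)/p$. *)

(* Words are sequences over a finite alphabet T : finType.
   Positions are 1-indexed as in the paper: u_k = letter u k. *)
From mathcomp Require Import all_boot all_order all_algebra.
Set Implicit Arguments. Unset Strict Implicit. Unset Printing Implicit Defensive.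
Import Order.TTheory GRing.Theory Num.Theory.

Section Words.
Variable T : eqType.

Definition letter (u : seq T) (k : nat) : option T :=
  if k == 0 then None else onth u k.-1.

(* u[i..j] = u_i ... u_j *)
Definition factor (u : seq T) (i j : nat) : seq T :=
  take (j.+1 - i) (drop i.-1 u).

Definition is_period (w : seq T) (p : nat) : bool :=
  (0 < p) && all (fun k => letter w k == letter w (k + p)) (iota 1 (size w - p)).

(* the (shortest) period: the smallest positive p that is a period of w
   (for nonempty w, p = |w| is always a period, so the search succeeds) *)
Definition per (w : seq T) : nat :=
  (find (is_period w) (iota 1 (size w))).+1.

Definition is_run (u : seq T) (i j : nat) : bool :=
  let p := per (factor u i j) in
  [&& 1 <= i, i <= j, j <= size u,
      2 * p <= j.+1 - i,
      (i == 1) || (letter u i.-1 != letter u (i + p).-1) &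
      (j == size u) || (letter u (j.+1 - p) != letter u j.+1)].

Definition run_exponent (u : seq T) (i j : nat) : rat :=
  ((j.+1 - i)%:R / (per (factor u i j))%:R)%R.

Definition sum_exponents (u : seq T) : rat :=
  (\sum_(i < (size u).+1) \sum_(j < (size u).+1 | is_run u i j)
      run_exponent u i j)%R.

End Words.

(* Lyndon roots (Bannai, I, Inenaga, Nakashima, Takeda, Tsuruta).  Give each run
   r = [i..j] of period p the letter order in which the letter u_(j+1) following r is
   smaller than u_(j+1-p), and let B_r be the set of positions k > i at which a factor
   of r of length p starts that is a Lyndon word for this order.  Since the root of r is
   primitive, every 2p - 1 consecutive positions of r after i contain such a k, so
   |B_r| >= floor(e) - 1 >= e / 3 for the exponent e >= 2 of r.  The sets B_r are
   pairwise disjoint: runs with the same period sharing a position of B_r coincide by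
   maximality; for different periods and the same order, the longer Lyndon root would
   either have a border or be larger than one of its rotations; and for opposite orders
   a Lyndon root of period >= 2 at k gives u_k < u_(k-1) in both orders, whereas period
   1 gives u_k = u_(k-1).  Hence the exponents sum to at most 3n. *)

From mathcomp Require Import all_boot all_order all_algebra.
From mathcomp Require Import zify lra.
Import Order.TTheory GRing.Theory Num.Theory.

Set Implicit Arguments.
Unset Strict Implicit.
Unset Printing Implicit Defensive.

Section Lexicographic.
Variables (X : eqType) (lt : rel X).
Hypothesis lt_irr : irreflexive lt.
Hypothesis lt_trans : transitive lt.
Hypothesis lt_total : forall x y, x != y -> lt x y || lt y x.

(* Strict lexicographic order; a proper prefix is not smaller, so [lexlt] is only
   meaningful on words of equal length. *)
Fixpoint lexlt (s t : seq X) : bool :=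
  match s, t with
  | x :: s', y :: t' => lt x y || (x == y) && lexlt s' t'
  | _, _ => false
  end.

Lemma lexlt_irr : irreflexive lexlt.
Proof. by elim=> //= x s ->; rewrite lt_irr andbF. Qed.

Lemma lexlt_trans : transitive lexlt.
Proof.
elim=> [|y t IH] [|x s] [|z w] //=.
case/orP=> [lt_xy|/andP[/eqP-> lt_st]] /orP[lt_yz|/andP[/eqP<- lt_tw]].
- by rewrite (lt_trans lt_xy lt_yz).
- by rewrite lt_xy.
- by rewrite lt_yz.
- by rewrite eqxx (IH _ _ lt_st lt_tw) orbT.
Qed.

Lemma lexlt_asym s t : lexlt s t -> lexlt t s = false.
Proof. by move=> lt_st; apply/negP=> /(lexlt_trans lt_st); rewrite lexlt_irr. Qed.

Lemma lexlt_total s t : size s = size t -> s != t -> lexlt s t || lexlt t s.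
Proof.
elim: s t => [|x s IH] [|y t] //= [eq_sz].
have [<- neq_st|neq_xy _] := eqVneq x y; last first.
  by case/orP: (lt_total neq_xy) => ->; rewrite ?orbT.
by rewrite lt_irr /=; apply: IH => //; apply: contra neq_st => /eqP->.
Qed.

Lemma lexlt_cat2l s t1 t2 : lexlt (s ++ t1) (s ++ t2) = lexlt t1 t2.
Proof. by elim: s => //= x s ->; rewrite lt_irr eqxx. Qed.

Lemma lexlt_cat2r s1 s2 t : size s1 = size s2 ->
  lexlt (s1 ++ t) (s2 ++ t) -> lexlt s1 s2 || (s1 == s2).
Proof.
elim: s1 s2 => [|x s1 IH] [|y s2] //= [eq_sz] /orP[->//|/andP[/eqP<- lt_12]].
by rewrite lt_irr eqxx eqseq_cons eqxx /=; exact: IH.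
Qed.

Lemma lexlt_nth x0 s t i0 : size s = size t -> i0 < size s ->
  (forall i, i < i0 -> nth x0 s i = nth x0 t i) -> lt (nth x0 s i0) (nth x0 t i0) ->
  lexlt s t.
Proof.
elim: i0 s t => [|i0 IH] [|x s] [|y t] //= [eq_sz] lt_i0 eq_nth lt_xy; first by rewrite lt_xy.
have /= -> := eq_nth 0 isT; rewrite eqxx IH ?orbT // => i lt_i; exact: (eq_nth i.+1).
Qed.

Lemma exists_lexmin n (ss : seq (seq X)) : ss != [::] -> {in ss, forall s, size s = n} ->
  exists2 s, s \in ss & forall t, t \in ss -> t = s \/ lexlt s t.
Proof.
elim: ss => [|t ss IH] // _ sz_ss.
have [->|nz_ss] := eqVneq ss [::].
  by exists t => [|_ /[!inE]/eqP->]; [rewrite mem_head | left].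
have [s s_in min_s] : exists2 s, s \in ss & forall r, r \in ss -> r = s \/ lexlt s r.
  by apply: IH => // s s_in; apply: sz_ss; rewrite inE s_in orbT.
have [lt_ts|ge_ts] := boolP (lexlt t s).
  exists t => [|r /[!inE]/orP[/eqP->|/min_s[->|lt_sr]]]; rewrite ?mem_head //.
  - by left.
  - by right.
  - by right; apply: lexlt_trans lt_sr.
exists s => [|r /[!inE]/orP[/eqP->|/min_s//]]; first by rewrite inE s_in orbT.
have [->|neq_ts] := eqVneq t s; [by left | right].
have sz_ts : size t = size s by rewrite !sz_ss ?inE ?s_in ?orbT ?eqxx.
by have := lexlt_total sz_ts neq_ts; rewrite (negbTE ge_ts).
Qed.

Definition lyndon (w : seq X) : bool :=
  all (fun d => lexlt w (rot d w)) (iota 1 (size w).-1).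

Lemma lyndonP w d : lyndon w -> 0 < d < size w -> lexlt w (rot d w).
Proof. by move=> /allP lyn_w d_range; apply: lyn_w; rewrite mem_iota; lia. Qed.

Lemma lyndon_unbordered x y z : x != [::] -> y != [::] -> x ++ y = z ++ x ->
  ~~ lyndon (x ++ y).
Proof.
rewrite -!size_eq0 => nz_x nz_y def_w; apply/negP=> lyn_w.
have sz_zy : size z = size y by have := congr1 size def_w; rewrite !size_cat; lia.
have lt_yz : lexlt y z.
  have := lyndonP (d := size z) lyn_w; rewrite [in rot _ _]def_w rot_size_cat lexlt_cat2l.
  by apply; rewrite size_cat; lia.
have lt_w : lexlt (z ++ x) (y ++ x).
  have := lyndonP (d := size x) lyn_w; rewrite rot_size_cat [in lexlt _ (y ++ x)]def_w.
  by apply; rewrite size_cat; lia.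
have /orP[lt_zy|/eqP eq_zy] := lexlt_cat2r sz_zy lt_w.
- by rewrite (lexlt_asym lt_zy) in lt_yz.
- by rewrite eq_zy lexlt_irr in lt_yz.
Qed.

Lemma lyndon_head_lt_last x0 w : lyndon w -> 1 < size w -> lt (head x0 w) (last x0 w).
Proof.
case/lastP: w => [|[|x s] y] // lyn_w _; rewrite last_rcons /=.
have := lyndonP (d := size (x :: s)) lyn_w; rewrite -cats1 rot_size_cat size_cat addn1.
case/(_ _)/orP => [|//|/andP[/eqP eq_xy _]]; first by rewrite /=; lia.
have : ~~ lyndon ([:: y] ++ rcons s y).
  apply: (lyndon_unbordered (z := y :: s)) => //; first by rewrite -size_eq0 size_rcons.
  by rewrite /= cats1.
by move: lyn_w; rewrite eq_xy /= => ->.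
Qed.

Lemma exists_lyndon_rot w : 0 < size w -> (forall d, 0 < d < size w -> rot d w != w) ->
  exists2 d, d < size w & lyndon (rot d w).
Proof.
move=> nz_w prim_w; set rots := mkseq (rot^~ w) (size w).
have rot_in d : d <= size w -> rot d w \in rots.
  rewrite leq_eqVlt => /orP[/eqP->|lt_d]; last by apply: map_f; rewrite mem_iota.
  by rewrite rot_size; apply/mapP; exists 0; rewrite ?mem_iota ?rot0.
have nz_rots : rots != [::] by rewrite -size_eq0 size_mkseq -lt0n.
have sz_rots : {in rots, forall r, size r = size w} by move=> r /mapP[d _ ->]; rewrite size_rot.
have [r r_in min_r] := exists_lexmin nz_rots sz_rots.
case/mapP: r_in min_r => d; rewrite mem_iota => /= lt_d -> min_r.
exists d => //; apply/allP => e; rewrite mem_iota size_rot => e_range.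
have /min_r[eq_rot|//] : rot e (rot d w) \in rots by rewrite rot_rot_add rot_in ?leq_rot_add.
have /prim_w/eqP[] : 0 < e < size w by lia.
by apply: (@rot_inj d); rewrite -rot_rot.
Qed.

End Lexicographic.

Lemma iter_period (X : Type) (F : nat -> X) e :
  (forall y, F (y + e) = F y) -> forall q y, F (y + q * e) = F y.
Proof. by move=> F_e; elim=> [|q IH] y; rewrite ?addn0 // mulSn addnCA addnC F_e IH. Qed.

Lemma period_gcdn (X : Type) (F : nat -> X) p d : 0 < p ->
  (forall y, F (y + p) = F y) -> (forall y, F (y + d) = F y) ->
  forall y, F (y + gcdn p d) = F y.
Proof.
move=> p_gt0 F_p F_d y; have [c _ /dvdnP[m def_m]] := Bezoutl d p_gt0.
by rewrite -(iter_period F_d c) -addnA def_m iter_period.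
Qed.

Section Periodicity.
Variables (X : Type) (a : nat -> X).

Definition periodic_on (i j p : nat) : Prop :=
  forall x, i <= x -> x + p <= j -> a x = a (x + p).

Lemma periodic_on_mul i j p q x : periodic_on i j p ->
  i <= x -> x + q * p <= j -> a x = a (x + q * p).
Proof.
move=> per_p le_ix; elim: q => [|q IH] le_xj; first by rewrite addn0.
have -> : x + q.+1 * p = x + q * p + p by rewrite mulSn; lia.
by rewrite -per_p; [apply: IH|..]; lia.
Qed.

Lemma periodic_on_modn i j p x y : periodic_on i j p ->
  i <= x <= j -> i <= y <= j -> x = y %[mod p] -> a x = a y.
Proof.
wlog le_xy : x y / x <= y => [WLOG|per_p x_in y_in /eqP].
  by case/orP: (leq_total x y) => [|/WLOG]; [exact: WLOG | move=> eq_a ? ? ? /esym/eq_a->].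
rewrite eq_sym eqn_mod_dvd // => /dvdnP[q def_q].
by rewrite -(subnKC le_xy) def_q (periodic_on_mul (q := q) per_p) //; lia.
Qed.

Definition window k L := mkseq (fun t => a (k + t)) L.

Lemma size_window k L : size (window k L) = L.
Proof. exact: size_mkseq. Qed.

Lemma nth_window x0 k L t : t < L -> nth x0 (window k L) t = a (k + t).
Proof. exact: nth_mkseq. Qed.

Lemma window_cat k m n : window k (m + n) = window k m ++ window (k + m) n.
Proof.
rewrite /window /mkseq iotaD map_cat add0n -[in iota m n](addn0 m) iotaDl -map_comp.
by congr (_ ++ _); apply: eq_map => t /=; rewrite addnA.
Qed.

Lemma eq_window k k' L : (forall t, t < L -> a (k + t) = a (k' + t)) ->
  window k L = window k' L.
Proof. by move=> eq_a; apply/eq_in_map => t; rewrite mem_iota => /andP[_ /eq_a]. Qed.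

Lemma rot_window i j p k d : periodic_on i j p -> i <= k -> d <= p -> k + d + p <= j.+1 ->
  rot d (window k p) = window (k + d) p.
Proof.
move=> per_p le_ik le_dp le_kj.
rewrite -{1}(subnKC le_dp) window_cat -{1}(size_window k d) rot_size_cat.
rewrite -[in RHS](subnK le_dp) window_cat; congr (_ ++ _).
apply: eq_window => t lt_t; rewrite per_p; first congr a; lia.
Qed.

Lemma window_primitive i j p k : periodic_on i j p ->
  (forall g, 0 < g < p -> ~ periodic_on i j g) -> i <= k -> k + 2 * p <= j.+2 ->
  forall d, 0 < d < p -> rot d (window k p) <> window k p.
Proof.
move=> per_p min_p le_ik le_kj d d_range; rewrite (rot_window per_p) //; try lia.
move=> eq_w; have p_gt0 : 0 < p by lia.
have a_modn x y : i <= x <= j -> i <= y <= j -> x = y %[mod p] -> a x = a y.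
  exact: periodic_on_modn.
(* The root read cyclically has periods p and d, hence gcdn p d, which carries over
   to all of [i..j]. *)
pose F y := a (k + y %% p).
have F_p y : F (y + p) = F y by rewrite /F modnDr.
have F_d y : F (y + d) = F y.
  have lt_yp := ltn_pmod y p_gt0; have lt_ydp := ltn_pmod (y + d) p_gt0.
  have := congr1 (fun w => nth (a 0) w (y %% p)) eq_w; rewrite /= !nth_window // /F => <-.
  by apply: a_modn; rewrite ?modnDmr; try lia; congr modn; lia.
have a_F z : i <= z <= j -> a z = F (z + k * p.-1).
  move=> z_in; have := ltn_pmod (z + k * p.-1) p_gt0; rewrite /F => lt_mod.
  apply: a_modn; rewrite ?modnDmr; try lia.
  suff -> : k + (z + k * p.-1) = k * p + z by rewrite modnMDl.
  by rewrite -[in k * p](prednK p_gt0) mulnS; lia.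
apply: (min_p (gcdn p d)).
  by rewrite gcdn_gt0 p_gt0 (leq_ltn_trans _ (proj2 (andP d_range))) // dvdn_leq ?dvdn_gcdr; lia.
move=> x le_ix le_xj; have le_xj' : x <= j := leq_trans (leq_addr _ _) le_xj.
rewrite (a_F x) ?le_ix // (a_F (x + _)) ?le_xj ?(leq_trans le_ix (leq_addr _ _)) //.
by rewrite addnAC (period_gcdn p_gt0 F_p F_d).
Qed.

End Periodicity.

Lemma periodic_window_not_lyndon (X : eqType) (lt : rel X) (a : nat -> X) i j p k L :
  irreflexive lt -> transitive lt -> periodic_on a i j p -> 0 < p < L -> i <= k ->
  k + L <= j.+1 -> ~~ lyndon lt (window a k L).
Proof.
move=> lt_irr lt_trans per_p /andP[p_gt0 lt_pL] le_ik le_kj.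
rewrite -(subnK (ltnW lt_pL)) window_cat.
apply: (lyndon_unbordered lt_irr lt_trans (z := window a k p)).
- by rewrite -size_eq0 size_window; lia.
- by rewrite -size_eq0 size_window; lia.
rewrite -window_cat (subnK (ltnW lt_pL)) -{1}(subnKC (ltnW lt_pL)) window_cat.
congr (_ ++ _); apply: eq_window => t lt_t.
by rewrite (per_p (k + t)); [congr a|..]; lia.
Qed.

Section Runs.
Variables (T : finType) (u : seq T).
Local Notation n := (size u).
Local Notation a := (letter u).

Lemma size_factor i j : 0 < i <= j -> j <= n -> size (factor u i j) = j.+1 - i.
Proof. by case: i => // i _ le_jn; rewrite size_take size_drop /=; case: ltnP; lia. Qed.

Lemma letter_factor i j t : 0 < i -> 0 < t <= j.+1 - i ->
  letter (factor u i j) t = a (i + t).-1.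
Proof.
move=> i_gt0 /andP[t_gt0 le_t]; rewrite /letter /factor.
have -> : (t == 0) = false by case: t t_gt0 le_t.
have -> : ((i + t).-1 == 0) = false by apply/eqP; lia.
rewrite !onthE map_take map_drop nth_take; last by case: t t_gt0 le_t => // t; lia.
by rewrite nth_drop; congr nth; lia.
Qed.

Definition run_period i j := per (factor u i j).

Lemma run_period_gt0 i j : 0 < run_period i j.
Proof. by []. Qed.

Lemma periodic_on_run_period i j : 0 < i <= j -> j <= n ->
  periodic_on a i j (run_period i j).
Proof.
move=> ij_range le_jn x le_ix le_xj; set w := factor u i j.
have sz_w := size_factor ij_range le_jn.
have has_per : has (is_period w) (iota 1 (size w)).
  apply/hasP; exists (size w); first by rewrite mem_iota sz_w; lia.
  by rewrite /is_period sz_w subnn /=; lia.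
have := nth_find 0 has_per; rewrite nth_iota; last by move: has_per; rewrite has_find size_iota.
rewrite add1n -/(per w).
case/andP=> _ /allP/(_ (x.+1 - i)); rewrite mem_iota sz_w.
have x_range : 1 <= x.+1 - i < 1 + (j.+1 - i - per w) by rewrite /run_period -/w in le_xj; lia.
move=> /(_ x_range)/eqP; rewrite !letter_factor; try lia.
have -> : (i + (x.+1 - i)).-1 = x by lia.
by have -> : (i + (x.+1 - i + per w)).-1 = x + per w by lia.
Qed.

Lemma run_period_min i j g : 0 < i <= j -> j <= n -> 0 < g < run_period i j ->
  ~ periodic_on a i j g.
Proof.
move=> ij_range le_jn /andP[g_gt0 lt_g] per_g; set w := factor u i j.
have sz_w := size_factor ij_range le_jn.
have lt_find : g.-1 < find (is_period w) (iota 1 (size w)).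
  by move: lt_g; rewrite /run_period /per -/w; lia.
have := before_find 0 lt_find; rewrite nth_iota; last first.
  by apply: leq_trans lt_find _; rewrite -[X in _ <= X](size_iota 1 (size w)) find_size.
rewrite add1n prednK // /is_period g_gt0 => /negP; apply; apply/allP => t.
rewrite mem_iota sz_w => t_range; rewrite !letter_factor; try lia.
apply/eqP; have -> : (i + (t + g)).-1 = (i + t).-1 + g by lia.
apply: per_g; lia.
Qed.

Lemma run_bounds i j : is_run u i j ->
  [/\ 0 < i, i <= j, j <= n & 2 * run_period i j <= j.+1 - i].
Proof. by case/and5P=> ? ? ? ? /andP[]. Qed.

Lemma run_left_maximal i j : is_run u i j ->
  (i == 1) || (a i.-1 != a (i + run_period i j).-1).
Proof. by case/and5P=> ? ? ? ? /andP[]. Qed.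

Lemma run_right_maximal i j : is_run u i j ->
  (j == n) || (a (j.+1 - run_period i j) != a j.+1).
Proof. by case/and5P=> ? ? ? ? /andP[]. Qed.

Lemma periodic_on_run i j : is_run u i j -> periodic_on a i j (run_period i j).
Proof. by case/run_bounds=> i_gt0 le_ij le_jn _; apply: periodic_on_run_period; rewrite ?i_gt0. Qed.

Definition rank_lt (o : bool) : rel (option T) :=
  fun x y => if o then enum_rank y < enum_rank x else enum_rank x < enum_rank y.

Lemma rank_lt_irr o : irreflexive (rank_lt o).
Proof. by case: o => x; rewrite /rank_lt ltnn. Qed.

Lemma rank_lt_trans o : transitive (rank_lt o).
Proof. by case: o => y x z /= lt_xy lt_yz; [apply: ltn_trans lt_xy | apply: ltn_trans lt_yz]. Qed.

Lemma rank_lt_total o x y : x != y -> rank_lt o x y || rank_lt o y x.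
Proof.
move=> neq_xy; have : enum_rank x != enum_rank y :> nat.
  by apply: contra neq_xy => /eqP/val_inj/enum_rank_inj->.
by rewrite neq_ltn /rank_lt; case: o; rewrite // orbC.
Qed.

Lemma rank_lt_asym o x y : rank_lt o x y -> rank_lt o y x = false.
Proof. by case: o => /= lt_xy; apply/negbTE; rewrite -leqNgt ltnW. Qed.

Arguments rank_lt_irr : clear implicits.
Arguments rank_lt_trans : clear implicits.
Arguments rank_lt_total : clear implicits.

Lemma rank_ltN o x y : rank_lt (~~ o) x y = rank_lt o y x.
Proof. by case: o. Qed.

Definition run_order i j := rank_lt false (a (j.+1 - run_period i j)) (a j.+1).

Lemma run_order_next i j : is_run u i j -> j < n ->
  rank_lt (run_order i j) (a j.+1) (a (j.+1 - run_period i j)).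
Proof.
move=> /run_right_maximal; rewrite /run_order; case: eqP => [->|_ neq_a _]; first by rewrite ltnn.
case lt_a: (rank_lt false _ _); first exact: lt_a.
by have := rank_lt_total false _ _ neq_a; rewrite lt_a.
Qed.

Definition lyndon_root i j k : bool :=
  [&& i < k, k + run_period i j <= j.+1 &
      lyndon (rank_lt (run_order i j)) (window a k (run_period i j))].

Lemma lyndon_root_head_last i j k : is_run u i j -> lyndon_root i j k ->
  1 < run_period i j -> rank_lt (run_order i j) (a k) (a k.-1).
Proof.
move=> run_ij /and3P[lt_ik le_kj lyn_w] p_gt1.
have := lyndon_head_lt_last (rank_lt_irr _) (rank_lt_trans _) None lyn_w.
rewrite size_window -nth0 -nth_last size_window !nth_window ?addn0 ?prednK //; try lia.
move=> /(_ p_gt1); rewrite (periodic_on_run run_ij (x := k.-1)); try lia.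
by have -> : k.-1 + run_period i j = k + (run_period i j).-1 by lia.
Qed.

Lemma lyndon_root_period1 i j k : is_run u i j -> lyndon_root i j k ->
  run_period i j = 1 -> a k.-1 = a k.
Proof.
move=> run_ij /and3P[lt_ik le_kj _] p1.
have := periodic_on_run run_ij; rewrite p1 => /(_ k.-1); rewrite addn1 prednK; last lia.
by apply; lia.
Qed.

Section SamePeriod.
Variables (i j i' j' k : nat).
Hypotheses (run_ij : is_run u i j) (run_ij' : is_run u i' j').
Hypothesis eq_period : run_period i j = run_period i' j'.
Hypotheses (root_k : lyndon_root i j k) (root_k' : lyndon_root i' j' k).

Lemma run_start_leq : i <= i'.
Proof.
case/and3P: root_k => lt_ik le_kj _; case/and3P: root_k' => lt_ik' le_kj' _.
have [i'_gt0 _ _ _] := run_bounds run_ij'; rewrite leqNgt; apply/negP => lt_i'i.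
have := run_left_maximal run_ij.
rewrite (_ : i == 1 = false) /=; last by apply/negbTE; rewrite neq_ltn; lia.
rewrite eq_period (_ : (i + _).-1 = i.-1 + run_period i' j'); last by lia.
by rewrite -(periodic_on_run run_ij') ?eqxx //; lia.
Qed.

Lemma run_end_leq : j <= j'.
Proof.
case/and3P: root_k => lt_ik le_kj _; case/and3P: root_k' => lt_ik' le_kj' _.
have [_ _ le_jn _] := run_bounds run_ij; rewrite leqNgt; apply/negP => lt_j'j.
have := run_right_maximal run_ij'.
rewrite (_ : j' == n = false) /=; last by apply/negbTE; rewrite neq_ltn; lia.
rewrite -eq_period (periodic_on_run run_ij) ?subnK ?eqxx //; lia.
Qed.

End SamePeriod.

Lemma lyndon_root_period_lt i j i' j' k : is_run u i j -> is_run u i' j' ->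
  lyndon_root i j k -> lyndon_root i' j' k -> run_order i j = run_order i' j' ->
  run_period i j < run_period i' j' -> False.
Proof.
move=> run_ij run_ij' /and3P[lt_ik le_kj _] /and3P[_ le_kj' lyn_w] eq_order lt_pp'.
rewrite -eq_order in lyn_w; set o := run_order i j in lyn_w.
set p := run_period i j in le_kj lt_pp'; set p' := run_period i' j' in le_kj' lt_pp' lyn_w.
have [i_gt0 le_ij le_jn _] := run_bounds run_ij; have [_ _ le_j'n _] := run_bounds run_ij'.
have per_p : periodic_on a i j p := periodic_on_run run_ij.
have p_gt0 : 0 < p := run_period_gt0 i j.
have next_lt : j < n -> rank_lt o (a j.+1) (a (j.+1 - p)) := run_order_next run_ij.
clearbody p p'.
(* Either the longer root lies inside the run of period p and is bordered, or its
   rotation by p is smaller: it reaches u_(j+1) where the root reads u_(j+1-p). *)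
have [le_kpj|lt_jkp] := leqP (k + p') j.+1.
  move: lyn_w; apply/negP.
  by apply: (periodic_window_not_lyndon (rank_lt_irr o) (rank_lt_trans o) per_p); lia.
have def_w : window a k p' = window a k p ++ window a (k + p) (p' - p).
  by rewrite -window_cat subnKC // ltnW.
have lt_jn : j < n by lia.
have lt_rot : lexlt (rank_lt o) (window a k p') (rot p (window a k p')).
  by apply: lyndonP lyn_w _; rewrite size_window; lia.
have : lexlt (rank_lt o) (rot p (window a k p')) (window a k p').
  have := rot_size_cat (window a k p) (window a (k + p) (p' - p)).
  rewrite size_window -def_w => ->.
  have lt_i0 : j.+1 - k - p < p' - p by lia.
  apply: (lexlt_nth (x0 := None) (i0 := j.+1 - k - p)).
  - by rewrite size_cat !size_window subnK // ltnW.
  - by rewrite size_cat !size_window; lia.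
  - move=> t lt_t; rewrite nth_cat size_window (ltn_trans lt_t lt_i0).
    have lt_tp' : t < p' := ltn_trans lt_t (leq_trans lt_i0 (leq_subr _ _)).
    rewrite !nth_window ?lt_tp' ?(ltn_trans lt_t lt_i0) //.
    by rewrite (per_p (k + t)); [congr a|..]; lia.
  rewrite nth_cat size_window lt_i0 !nth_window ?(leq_trans lt_i0 (leq_subr _ _)) //.
  have -> : k + p + (j.+1 - k - p) = j.+1 by lia.
  have -> : k + (j.+1 - k - p) = j.+1 - p by lia.
  exact: next_lt.
by rewrite (lexlt_asym (rank_lt_irr o) (rank_lt_trans o) lt_rot).
Qed.

Lemma lyndon_root_uniq i j i' j' k : is_run u i j -> is_run u i' j' ->
  lyndon_root i j k -> lyndon_root i' j' k -> (i, j) = (i', j').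
Proof.
move=> run_ij run_ij' root_k root_k'.
have [eq_p|neq_p] := eqVneq (run_period i j) (run_period i' j').
  have le_i := run_start_leq run_ij run_ij' eq_p root_k root_k'.
  have ge_i := run_start_leq run_ij' run_ij (esym eq_p) root_k' root_k.
  have le_j := run_end_leq run_ij run_ij' eq_p root_k root_k'.
  have ge_j := run_end_leq run_ij' run_ij (esym eq_p) root_k' root_k.
  by congr pair; apply/eqP; rewrite eqn_leq ?le_i ?le_j.
exfalso; have [eq_o|neq_o] := eqVneq (run_order i j) (run_order i' j').
  case: ltngtP neq_p => // [lt_p|lt_p'] _.
  - exact: lyndon_root_period_lt run_ij run_ij' root_k root_k' eq_o lt_p.
  - exact: lyndon_root_period_lt run_ij' run_ij root_k' root_k (esym eq_o) lt_p'.
have eq_o' : run_order i' j' = ~~ run_order i j.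
  by case: (run_order i j) (run_order i' j') neq_o => [] [].
have [p_gt1|p1] := ltnP 1 (run_period i j); have [p'_gt1|p'1] := ltnP 1 (run_period i' j').
- have := lyndon_root_head_last run_ij' root_k' p'_gt1.
  by rewrite eq_o' rank_ltN (rank_lt_asym (lyndon_root_head_last run_ij root_k p_gt1)).
- have := lyndon_root_head_last run_ij root_k p_gt1.
  by rewrite (lyndon_root_period1 run_ij' root_k') ?rank_lt_irr //; apply/eqP; rewrite eqn_leq p'1.
- have := lyndon_root_head_last run_ij' root_k' p'_gt1.
  by rewrite (lyndon_root_period1 run_ij root_k) ?rank_lt_irr //; apply/eqP; rewrite eqn_leq p1.
- have p_gt0 := run_period_gt0 i j; have p'_gt0 := run_period_gt0 i' j'.
  by move/eqP: neq_p; lia.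
Qed.

Lemma exists_lyndon_root i j m : is_run u i j -> i < m -> m + 2 * run_period i j <= j.+2 ->
  exists2 x, x < run_period i j & lyndon_root i j (m + x).
Proof.
move=> run_ij lt_im le_mj; have [i_gt0 le_ij le_jn _] := run_bounds run_ij.
have per_p := periodic_on_run run_ij.
have min_p : forall g, 0 < g < run_period i j -> ~ periodic_on a i j g.
  by move=> g; apply: (run_period_min _ le_jn); rewrite i_gt0.
have prim := window_primitive per_p min_p (ltnW lt_im) le_mj.
set o := run_order i j; set w := window a m (run_period i j).
have [d lt_dp lyn_d] : exists2 d, d < size w & lyndon (rank_lt o) (rot d w).
  apply: (exists_lyndon_rot (rank_lt_irr o) (rank_lt_trans o) (rank_lt_total o)).
    by rewrite size_window.
  by move=> d; rewrite size_window => /prim/eqP.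
rewrite size_window in lt_dp; exists d => //; apply/and3P; split; [lia | lia |].
by rewrite -(rot_window per_p) //; [exact: ltnW lt_im | exact: ltnW | lia].
Qed.

Definition lyndon_roots i j : {set 'I_n.+1} := [set k : 'I_n.+1 | lyndon_root i j k].

Lemma card_lyndon_roots i j : is_run u i j ->
  ((j.+1 - i) %/ run_period i j).-1 <= #|lyndon_roots i j|.
Proof.
move=> run_ij; have [i_gt0 le_ij le_jn _] := run_bounds run_ij.
have p_gt0 := run_period_gt0 i j.
have le_qp := leq_divM (j.+1 - i) (run_period i j).
(* The blocks of p positions following i, all but the last of which fit twice in the
   run, each contain the start of a Lyndon root. *)
pose block (k : 'I_n.+1) := (k - i.+1) %/ run_period i j.
have sub_blocks :
    {subset iota 0 ((j.+1 - i) %/ run_period i j).-1 <= image block (lyndon_roots i j)}.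
  move=> t; rewrite mem_iota add0n => /andP[_ lt_tq].
  have : (t + 2) * run_period i j <= j.+1 - i.
    by apply: leq_trans le_qp; rewrite leq_mul2r; apply/orP; right; lia.
  rewrite mulnDl => le_t2.
  have lt_im : i < i.+1 + t * run_period i j by lia.
  have le_mj : i.+1 + t * run_period i j + 2 * run_period i j <= j.+2 by lia.
  have [x lt_xp root_x] := exists_lyndon_root run_ij lt_im le_mj.
  have lt_k : i.+1 + t * run_period i j + x < n.+1 by case/and3P: root_x; lia.
  apply/imageP; exists (Ordinal lt_k); first by rewrite inE.
  by rewrite /block /= -addnA addKn divnMDl // divn_small // addn0.
have := uniq_leq_size (iota_uniq 0 _) sub_blocks.
by rewrite size_iota size_image.
Qed.

Lemma run_exponent_le i j : is_run u i j ->
  (run_exponent u i j <= (3 * #|lyndon_roots i j|)%:R :> rat)%R.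
Proof.
move=> run_ij; have [_ _ _ le_2p] := run_bounds run_ij.
have := card_lyndon_roots run_ij; rewrite /run_exponent -/(run_period i j).
have p_gt0 := run_period_gt0 i j.
rewrite ler_pdivrMr ?ltr0n // -natrM ler_nat.
move: (run_period i j) (j.+1 - i) (#|lyndon_roots i j|) p_gt0 le_2p => p L B p_gt0 le_2p le_qB.
have q_ge2 : 2 <= L %/ p by rewrite leq_divRL // mulnC.
apply: leq_trans (ltnW (ltn_ceil L p_gt0)) _.
by rewrite leq_mul2r; apply/orP; right; lia.
Qed.

Lemma sum_card_lyndon_roots :
  \sum_(i < n.+1) \sum_(j < n.+1 | is_run u i j) #|lyndon_roots i j| <= n.
Proof.
pose runs_at (k : 'I_n.+1) :=
  [set r : 'I_n.+1 * 'I_n.+1 | is_run u r.1 r.2 && (k \in lyndon_roots r.1 r.2)].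
have card_runs_at k : #|runs_at k| =
    \sum_(r : 'I_n.+1 * 'I_n.+1 | is_run u r.1 r.2) if k \in lyndon_roots r.1 r.2 then 1 else 0.
  rewrite -sum1_card big_mkcond [RHS]big_mkcond; apply: eq_bigr => r _.
  by rewrite inE; case: (is_run _ _ _).
have runs_at_le1 k : #|runs_at k| <= 1.
  apply/card_le1_eqP => -[i j] [i' j']; rewrite !inE /= => /andP[run_ij root] /andP[run_ij' root'].
  by case: (lyndon_root_uniq run_ij run_ij' root root') => /val_inj-> /val_inj->.
have runs_at0 : runs_at ord0 = set0.
  by apply/setP => -[i j]; rewrite !inE /lyndon_root ltn0 andbF.
rewrite pair_big_dep /=.
under eq_bigr => r _ do rewrite -sum1_card big_mkcond /=.
rewrite exchange_big /= big_ord_recl.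
rewrite -card_runs_at runs_at0 cards0 add0n.
under eq_bigr => k _ do rewrite -card_runs_at.
apply: (@leq_trans (\sum_(k < n) 1)); first by apply: leq_sum => k _; apply: runs_at_le1.
by rewrite sum_nat_const card_ord muln1.
Qed.

End Runs.

Local Open Scope ring_scope.

Lemma sum_exponents_le (T : finType) (u : seq T) : sum_exponents u <= (3 * size u)%:R.
Proof.
pose N := \sum_(i < (size u).+1) \sum_(j < (size u).+1 | is_run u i j) #|lyndon_roots u i j|.
apply: (@le_trans _ _ (3 * N)%:R).
  rewrite natrM natr_sum mulr_sumr; apply: ler_sum => i _.
  rewrite natr_sum mulr_sumr; apply: ler_sum => j run_ij.
  by rewrite -natrM; apply: run_exponent_le.
by rewrite ler_nat leq_mul2l sum_card_lyndon_roots orbT.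
Qed.

Theorem theorem2 (T : finType) (n : nat) (u : seq T) :
  (0 < n)%N -> size u = n ->
  sum_exponents u < (41%:R / 10%:R) * n%:R.
Proof.
move=> n_gt0 size_u; subst n; apply: le_lt_trans (sum_exponents_le u) _.
have n_pos : (0 : rat) < (size u)%:R by rewrite ltr0n.
by rewrite natrM; lra.
Qed.
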